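(* Let $\mu^*\approx 0.01191$ be the unique root in $(0,1)$ of $81\mu=(1-\mu)^3$. For the Best-Fit algorithm in the random-order model restricted to inputs in which every item has size in $(1/4,1/2]$, $$\limsup_{m\to\infty}\ \sup_{I:\ \mathrm{Opt}(I)=m,\ \text{all sizes in }(1/4,1/2]}\ \frac{\mathbb E_\sigma[\mathrm{BF}(I_\sigma)]}{\mathrm{Opt}(I)}\le \frac32-\frac{\mu^*}{2}\approx 1.4941.$$
   Context: Bin packing: items with sizes in $(0,1]$ are to be partitioned into the minimum number $\mathrm{Opt}(I)$ of bins of total size at most $1$. Best-Fit (BF) packs each arriving item into the fullest bin in which it fits, opening a new bin if necessary; $\mathrm{BF}(L)$ is the number of bins it uses on list $L$. In the random-order model, the list $I=(x_1,\dots,x_n)$ is fixed by an adversary, $\sigma$ is a uniformly random permutation of $[n]$, and items arrive in the order $I_\sigma=(x_{\sigma(1)},\dots,x_{\sigma(n)})$. *)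

From HB Require Import structures.
From mathcomp Require Import all_boot all_order all_algebra all_fingroup.
From mathcomp Require Import all_classical all_reals all_analysis.
Set Implicit Arguments. Unset Strict Implicit. Unset Printing Implicit Defensive.
Import Order.TTheory GRing.Theory Num.Theory.
Local Open Scope ring_scope.

Section BinPacking.
Variable R : realType.

(* One Best-Fit step: [loads] is the list of current bin loads (in order of
   opening). The item [x] goes into a fullest bin among those where it fits
   (first such bin in case of ties -- ties do not affect the number of bins),
   otherwise a new bin is opened. *)
Definition bf_step (loads : seq R) (x : R) : seq R :=
  let fits := [seq i <- iota 0 (size loads) | nth 0 loads i + x <= 1] in
  match fits with
  | [::] => rcons loads x
  | i0 :: _ =>
      let j := foldl (fun j i => if nth 0 loads j < nth 0 loads i then i else j)
                     i0 fits in
      set_nth 0 loads j (nth 0 loads j + x)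
  end.

Definition BF (L : seq R) : nat := size (foldl bf_step [::] L).

Definition packable (n : nat) (x : 'I_n -> R) (k : nat) : Prop :=
  exists f : 'I_n -> 'I_k, forall j : 'I_k, \sum_(i < n | f i == j) x i <= 1.

Definition is_opt (n : nat) (x : 'I_n -> R) (m : nat) : Prop :=
  packable x m /\ forall k : nat, (k < m)%N -> ~ packable x k.

Definition permuted_list (n : nat) (x : 'I_n -> R) (s : 'S_n) : seq R :=
  [seq x (s i) | i <- enum 'I_n].

Definition expected_BF (n : nat) (x : 'I_n -> R) : R :=
  (\sum_(s : 'S_n) (BF (permuted_list x s))%:R) / (n`!)%:R.

Definition sizes_in_quarter_half (n : nat) (x : 'I_n -> R) : Prop :=
  forall i : 'I_n, 1/4 < x i /\ x i <= 1/2.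

Definition bf_ratio_sup (m : nat) : \bar R :=
  ereal_sup [set r : \bar R | exists (n : nat) (x : 'I_n -> R),
               [/\ sizes_in_quarter_half x, is_opt x m &
                   r = (expected_BF x / m%:R)%:E]].

End BinPacking.

(* Every item exceeds 1/4, so a bin of load at most 1/2 holds a single item, and
   Best-Fit never keeps two such light bins.  The potential
     4 * #bins - 2 * #light bins - [some bin has load in (1/2, 2/3]]
   grows by at most 2 per item, and by at most 5 over three consecutive items of
   size at most 1/3: opening a light bin with a small item and closing it with the
   next small item creates a bin of load in (1/2, 2/3].  Hence
   4 BF(L) + K(L) <= 2 |L| + 3, where K counts the aligned triples of small items.
   In a uniformly random order every aligned triple is all-small with probability
   a(a-1)(a-2) / (n(n-1)(n-2)), a being the number of small items.  A packing into
   m bins forces n <= 3m and at most 2m items above 1/3, so either 2n + 3 is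
   already below (6 - 2 mu) m, or n is close to 3m, a >= n - 2m is close to m and
   E[K] ~ m/27 absorbs the excess. *)

From HB Require Import structures.
From mathcomp Require Import all_boot all_order all_algebra all_fingroup.
From mathcomp Require Import all_classical all_reals all_analysis.
From mathcomp Require Import all_solvable.
From mathcomp Require Import lra zify ring.
Import Order.TTheory GRing.Theory Num.Theory.
Local Open Scope ring_scope.
Set Implicit Arguments. Unset Strict Implicit. Unset Printing Implicit Defensive.

Section BestFitStep.
Variable R : realType.
Implicit Types (st : seq R) (x : R).

Lemma foldl_argmax (f : nat -> R) (i0 : nat) (s : seq nat) :
  let j := foldl (fun j i => if f j < f i then i else j) i0 s in
  j \in i0 :: s /\ forall i, i \in i0 :: s -> f i <= f j.
Proof.
elim: s i0 => [|a s IHs] i0 /=.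
  by split=> [|i]; rewrite ?mem_head // inE => /eqP ->.
have [fi0a|fai0] := ltP (f i0) (f a).
  have [ja le_j] := IHs a; split.
    by move: ja; rewrite !inE => /orP[->|->]; rewrite ?orbT.
  move=> i; rewrite inE => /orP[/eqP->|]; last exact: le_j.
  exact: le_trans (ltW fi0a) (le_j _ (mem_head _ _)).
have [ji0 le_j] := IHs i0; split.
  by move: ji0; rewrite !inE => /orP[->|->]; rewrite ?orbT.
move=> i; rewrite !inE => /orP[/eqP->|/orP[/eqP->|i_s]].
- exact: le_j (mem_head _ _).
- exact: le_trans fai0 (le_j _ (mem_head _ _)).
- by apply: le_j; rewrite inE i_s orbT.
Qed.

Variant bf_step_spec st x : seq R -> Prop :=
| BfStepNew of (forall l, l \in st -> 1 < l + x) : bf_step_spec st x (rcons st x)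
| BfStepFit s1 lj s2 of st = s1 ++ lj :: s2 & lj + x <= 1
    & (forall l, l \in st -> l + x <= 1 -> l <= lj) :
    bf_step_spec st x (s1 ++ (lj + x) :: s2).

Lemma bf_stepP st x : bf_step_spec st x (bf_step st x).
Proof.
rewrite /bf_step; set fits := [seq i <- iota 0 (size st) | nth 0 st i + x <= 1].
have fitsE i : (i \in fits) = (i < size st)%N && (nth 0 st i + x <= 1).
  by rewrite mem_filter mem_iota add0n andbC.
have index_fits l : l \in st -> l + x <= 1 -> index l st \in fits.
  by move=> st_l lx; rewrite fitsE index_mem st_l nth_index.
case fitsE0: fits => [|i0 rest].
  constructor=> l st_l; rewrite ltNge; apply/negP => /(index_fits _ st_l).
  by rewrite fitsE0.
have [j_in j_max] := foldl_argmax (nth 0 st) i0 (i0 :: rest).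
set j := foldl _ _ _ in j_in j_max *.
have in_fits i : (i \in i0 :: i0 :: rest) = (i \in fits).
  by rewrite fitsE0 !inE orbA orbb.
rewrite in_fits in j_in.
move: (j_in); rewrite fitsE => /andP[j_lt j_fit].
rewrite set_nthE j_lt; apply: BfStepFit => //.
- by rewrite -drop_nth // cat_take_drop.
- move=> l st_l /(index_fits _ st_l) fit_l; rewrite -(nth_index 0 st_l).
  by apply: j_max; rewrite in_fits.
Qed.

End BestFitStep.

Section Potential.
Variable R : realType.
Implicit Types (st : seq R) (x : R).

Definition medium_item x := (1/4 < x) && (x <= 1/2).
Definition small_item x := x <= 1/3.

Definition light_bins st := count (fun l => l <= 1/2) st.
Definition mid_bin st := has (fun l => (1/2 < l) && (l <= 2/3)) st.
Definition light_bins_small st := all (fun l => (l <= 1/2) ==> small_item l) st.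

Definition bf_inv st :=
  all (fun l => (1/4 < l) && (l <= 1)) st && (light_bins st <= 1)%N.

Definition potential st : int :=
  4 * (size st)%:Z - 2 * (light_bins st)%:Z - (mid_bin st : nat)%:Z.

Variant bf_medium_spec st x : seq R -> Prop :=
| BfOpen of light_bins st = 0%N & light_bins (rcons st x) = 1%N
    & mid_bin (rcons st x) = mid_bin st
    & (small_item x -> light_bins_small (rcons st x)) :
    bf_medium_spec st x (rcons st x)
| BfClose st' of size st' = size st & light_bins st = 1%N & light_bins st' = 0%N
    & (mid_bin st <= mid_bin st')%N
    & (small_item x -> light_bins_small st -> (mid_bin st < mid_bin st')%N) :
    bf_medium_spec st x st'
| BfFill st' of size st' = size st & light_bins st' = light_bins st :
    bf_medium_spec st x st'.

Lemma bf_step_mediumP st x : bf_inv st -> medium_item x ->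
  bf_medium_spec st x (bf_step st x).
Proof.
move=> /andP[/allP st_range light_le1] /andP[x_gt x_le].
case: bf_stepP => [no_fit | s1 lj s2 st_def ljx lj_max].
  have light0 : light_bins st = 0%N.
    rewrite /light_bins (eq_in_count (a2 := pred0)) ?count_pred0 // => l /no_fit lx.
    by apply/negbTE; rewrite -ltNge; lra.
  apply: BfOpen => //.
  - by rewrite /light_bins -cats1 count_cat -/(light_bins st) light0 /= x_le.
  - by rewrite /mid_bin has_rcons ltNge x_le.
  move=> x_small; rewrite /light_bins_small all_rcons x_small implybT /=.
  apply/allP => l /no_fit lx; apply/implyP; lra.
have lj_st : lj \in st by rewrite st_def mem_cat mem_head orbT.
have /andP[lj_gt lj_le] := st_range _ lj_st.
have size_fit : size (s1 ++ (lj + x) :: s2) = size st by rewrite st_def !size_cat.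
have light_fit : (lj + x <= 1/2) = false by apply/negbTE; rewrite -ltNge; lra.
have [lj_light | lj_heavy] := lerP lj (1/2); last first.
  apply: BfFill => //; rewrite /light_bins st_def !count_cat /= light_fit.
  by rewrite leNgt lj_heavy.
have light1 : light_bins st = 1%N.
  by apply/eqP; rewrite eqn_leq light_le1 -has_count; apply/hasP; exists lj.
apply: BfClose => //.
- by move: light1; rewrite /light_bins st_def !count_cat /= lj_light light_fit; lia.
- rewrite /mid_bin st_def !has_cat /= ltNge lj_light /=.
  by case: has; case: has; case: (_ && _).
move=> x_small /allP st_small.
have lj_small : lj <= 1/3 by have := st_small _ lj_st; rewrite lj_light.
(* A bin of load in (1/2, 2/3] would fit [x] and be fuller than [lj]. *)
have -> : mid_bin st = false.
  apply/negbTE/hasPn => l l_st; apply/negP => /andP[l_gt l_le].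
  have := lj_max l l_st; rewrite /small_item in x_small; lra.
rewrite lt0b /mid_bin has_cat /=; apply/orP; right; apply/orP; left.
rewrite /small_item in x_small; apply/andP; split; lra.
Qed.

Lemma bf_step_inv st x : bf_inv st -> medium_item x -> bf_inv (bf_step st x).
Proof.
move=> inv_st x_medium; have /andP[/allP st_range light_st] := inv_st.
have /andP[x_gt x_le] := x_medium.
have light_le1 : (light_bins (bf_step st x) <= 1)%N.
  by case: bf_step_mediumP => // *; lia.
rewrite /bf_inv light_le1 andbT; apply/allP.
case: bf_stepP => [_ | s1 lj s2 st_def ljx _] l.
  by rewrite mem_rcons inE => /orP[/eqP->|/st_range//]; apply/andP; split; lra.
have lj_st : lj \in st by rewrite st_def mem_cat mem_head orbT.
have /andP[lj_gt _] := st_range _ lj_st.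
rewrite !mem_cat inE => /or3P[l_s1|/eqP->|l_s2]; last 2 first.
- by apply/andP; split; lra.
- by apply: st_range; rewrite st_def mem_cat inE l_s2 !orbT.
by apply: st_range; rewrite st_def mem_cat l_s1.
Qed.

Lemma potential_bf_step st x : bf_inv st -> medium_item x ->
  potential (bf_step st x) <= potential st + 2.
Proof.
move=> inv_st x_medium; rewrite /potential.
by case: bf_step_mediumP => // *; rewrite ?size_rcons; lia.
Qed.

Lemma potential_bf_step_keep_light st x : bf_inv st -> medium_item x ->
  light_bins (bf_step st x) = light_bins st ->
  potential (bf_step st x) <= potential st + 1.
Proof.
move=> inv_st x_medium; rewrite /potential.
by case: bf_step_mediumP => // *; rewrite ?size_rcons; lia.
Qed.

Lemma light_bins_small_bf_step st x : bf_inv st -> medium_item x ->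
  light_bins st = 0%N -> small_item x -> light_bins_small (bf_step st x).
Proof.
move=> inv_st x_medium light0 x_small.
case: bf_step_mediumP => // [_ _ _ /(_ x_small) //|st' _|st' _ light_st'].
  by rewrite light0.
apply/allP => l l_st'; apply/implyP => l_light; exfalso.
have : (0 < light_bins st')%N by rewrite -has_count; apply/hasP; exists l.
by rewrite light_st' light0.
Qed.

Lemma potential_bf_step_close st x : bf_inv st -> medium_item x ->
  light_bins st = 1%N -> small_item x -> light_bins_small st ->
  potential (bf_step st x) <= potential st + 1.
Proof.
move=> inv_st x_medium light1 x_small st_small; rewrite /potential.
case: bf_step_mediumP => // [|st' size_st' _ _ _ /(_ x_small st_small)|st'].
- by rewrite light1.
- by move=> *; lia.
- by move=> *; lia.
Qed.

Lemma light_bins_le1 st : bf_inv st -> (light_bins st <= 1)%N.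
Proof. by case/andP. Qed.

Lemma potential_bf_step2_small st a b : bf_inv st -> light_bins st = 0%N ->
  medium_item a -> medium_item b -> small_item a -> small_item b ->
  potential (bf_step (bf_step st a) b) <= potential st + 3.
Proof.
move=> inv_st light0 a_medium b_medium a_small b_small.
have inv_st1 := bf_step_inv inv_st a_medium.
have := potential_bf_step inv_st a_medium.
have [same|changed] := eqVneq (light_bins (bf_step st a)) (light_bins st).
  have := potential_bf_step_keep_light inv_st a_medium same.
  have := potential_bf_step inv_st1 b_medium; lia.
have light1 : light_bins (bf_step st a) = 1%N.
  by move: changed (light_bins_le1 inv_st1); rewrite light0; lia.
have := potential_bf_step_close inv_st1 b_medium light1 b_small
  (light_bins_small_bf_step inv_st a_medium light0 a_small); lia.
Qed.

Definition small_triple a b c := [&& small_item a, small_item b & small_item c].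

Fixpoint small_triples (L : seq R) : nat :=
  if L is a :: b :: c :: L' then (small_triple a b c + small_triples L')%N else 0%N.

Lemma potential_bf_step3 st a b c : bf_inv st -> all medium_item [:: a; b; c] ->
  potential (foldl (@bf_step R) st [:: a; b; c]) + (small_triple a b c : nat)%:Z
    <= potential st + 6.
Proof.
move=> inv_st /and4P[a_medium b_medium c_medium _] /=.
have inv_st1 := bf_step_inv inv_st a_medium.
have inv_st2 := bf_step_inv inv_st1 b_medium.
have := potential_bf_step inv_st a_medium.
have := potential_bf_step inv_st1 b_medium.
have := potential_bf_step inv_st2 c_medium.
case: (boolP (small_triple a b c)) => [/and3P[a_small b_small c_small]|_]; last by lia.
have [light0|light1] : light_bins st = 0%N \/ light_bins st = 1%N.
  by have := light_bins_le1 inv_st; lia.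
  have := potential_bf_step2_small inv_st light0 a_medium b_medium a_small b_small.
  lia.
have [same|changed] := eqVneq (light_bins (bf_step st a)) (light_bins st).
  by have := potential_bf_step_keep_light inv_st a_medium same; lia.
have light0 : light_bins (bf_step st a) = 0%N.
  by move: changed (light_bins_le1 inv_st1); rewrite light1; lia.
have := potential_bf_step2_small inv_st1 light0 b_medium c_medium b_small c_small.
lia.
Qed.

Lemma bf_run_inv st L : bf_inv st -> all medium_item L ->
  bf_inv (foldl (@bf_step R) st L).
Proof.
elim: L st => //= a L IHL st inv_st /andP[a_medium L_medium].
exact/IHL/L_medium/bf_step_inv.
Qed.

Lemma potential_bf_run st L : bf_inv st -> all medium_item L ->
  potential (foldl (@bf_step R) st L) + (small_triples L)%:Z
    <= potential st + 2 * (size L)%:Z.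
Proof.
have [n] := ubnP (size L); elim: n st L => // n IHn st.
case=> [|a [|b [|c L]]] /= size_L inv_st.
- by lia.
- by case/andP=> a_medium _; have := potential_bf_step inv_st a_medium; lia.
- case/and3P=> a_medium b_medium _; have inv_st1 := bf_step_inv inv_st a_medium.
  have := potential_bf_step inv_st a_medium.
  have := potential_bf_step inv_st1 b_medium; lia.
case/and4P=> a_medium b_medium c_medium L_medium.
have abc_medium : all medium_item [:: a; b; c].
  by rewrite /= a_medium b_medium c_medium.
have := potential_bf_step3 inv_st abc_medium.
have := IHn _ L (ltnW (ltnW size_L)) (bf_run_inv inv_st abc_medium) L_medium.
rewrite /=; lia.
Qed.

Lemma BF_small_triples L : all medium_item L ->
  (4 * BF L + small_triples L <= 2 * size L + 3)%N.
Proof.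
move=> L_medium; have inv0 : bf_inv [::] by [].
have := potential_bf_run inv0 L_medium.
have := light_bins_le1 (bf_run_inv inv0 L_medium).
rewrite /potential /BF /=; lia.
Qed.

End Potential.

Section PermutationsInto.
Local Open Scope nat_scope.
Variables (T : finType) (A : {set T}).

Definition perms_into k (t : k.-tuple T) : {set {perm T}} :=
  [set s : {perm T} | all [in A] [seq s i | i <- t]].

Lemma card_perms_into_uniq k (t t' : k.-tuple T) : uniq t -> uniq t' ->
  #|perms_into t| = #|perms_into t'|.
Proof.
move=> t_uniq t'_uniq.
have k_le : k <= #|T| by rewrite -(size_tuple t) -(card_uniqP t_uniq) max_card.
have dtuple (u : k.-tuple T) : uniq u -> u \in k.-dtuple([set: T]).
  by move=> u_uniq; rewrite inE u_uniq; apply/fintype.subsetP => i; rewrite inE.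
have [a _ ->] := atransP2 (ntransitive_weak k_le (Sym_trans T))
  (dtuple _ t_uniq) (dtuple _ t'_uniq).
rewrite -[LHS](card_preimset _ (mulgI a)); apply: eq_card => s.
by rewrite !inE -map_comp; congr (all _ _); apply: eq_map => i; rewrite /= permM.
Qed.

Lemma sum_card_perms_into k :
  \sum_(t : k.-tuple T | uniq t) #|perms_into t| = (#|T|)`! * #|A| ^_ k.
Proof.
transitivity (\sum_(s : {perm T}) #|[set t : k.-tuple T | all [in A] t & uniq t]|).
  rewrite (eq_bigr (fun t => \sum_(s : {perm T}) (s \in perms_into t))); last first.
    move=> t _; rewrite -sum1_card big_mkcond.
    by apply: eq_bigr => s _; case: (_ \in _).
  rewrite exchange_big /=; apply: eq_bigr => s _.
  have map_s_inj : injective (fun t : k.-tuple T => [tuple of map s t]).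
    by move=> t u /(congr1 val)/(inj_map (@perm_inj _ s))/val_inj.
  rewrite -(card_preimset _ map_s_inj) -sum1dep_card.
  rewrite [LHS]big_mkcond [RHS]big_mkcond /=.
  apply: eq_bigr => t _; rewrite !inE map_inj_uniq; last exact: perm_inj.
  by rewrite andbC; case: uniq; case: all.
by rewrite sum_nat_const (card_uniq_tuples _ [in A]) -card_Sym cardsT mulnC.
Qed.

Lemma card_perms_into k (t : k.-tuple T) : uniq t ->
  #|perms_into t| * #|T| ^_ k = (#|T|)`! * #|A| ^_ k.
Proof.
move=> t_uniq; rewrite -sum_card_perms_into.
rewrite (eq_bigr (fun=> #|perms_into t|)); last first.
  by move=> u u_uniq; apply: card_perms_into_uniq.
rewrite sum_nat_const mulnC -(card_uniq_tuples _ predT); congr (_ * _).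
by apply: eq_card => u; rewrite inE all_predT.
Qed.

End PermutationsInto.

Section RandomOrder.
Variable R : realType.

Lemma small_triples_nth (L : seq R) : small_triples L =
  (\sum_(j < size L %/ 3)
     small_triple (nth 0%R L (3 * j)) (nth 0%R L (3 * j).+1) (nth 0%R L (3 * j).+2))%N.
Proof.
have [n] := ubnP (size L); elim: n L => // n IHn [|a [|b [|c L]]] //=;
  try by rewrite big_ord0.
move=> size_L; rewrite -addn3 divnDr // divnn addn1 big_ord_recl IHn; last by lia.
by congr (_ + _)%N; apply: eq_bigr => j _; rewrite lift0 mulnS add3n.
Qed.

Lemma nth_permuted_list n (x : 'I_n.+1 -> R) (s : 'S_n.+1) i : (i < n.+1)%N ->
  nth 0 (permuted_list x s) i = x (s (inord i)).
Proof.
move=> i_lt; rewrite -[i in LHS](inordK i_lt).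
by rewrite (nth_map ord0) ?size_enum_ord ?nth_ord_enum.
Qed.

Lemma sum_small_triples n (x : 'I_n -> R) :
  ((\sum_(s : 'S_n) small_triples (permuted_list x s)) * n ^_ 3
    = n %/ 3 * (n`! * #|[set i | small_item (x i)]| ^_ 3))%N.
Proof.
case: n x => [|n] x; first by rewrite muln0.
set A := [set i | small_item (x i)].
under eq_bigr do rewrite small_triples_nth size_map size_enum_ord.
rewrite exchange_big big_distrl /= -[X in (X * _)%N]card_ord -sum_nat_const.
apply: eq_bigr => j _.
have [lt0 lt1 lt2] : [/\ 3 * j < n.+1, (3 * j).+1 < n.+1 & (3 * j).+2 < n.+1]%N.
  by have := ltn_ord j; have := leq_divM n.+1 3; split; lia.
pose t := [tuple (inord (3 * j) : 'I_n.+1); inord (3 * j).+1; inord (3 * j).+2].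
have t_uniq : uniq t by rewrite /= !inE -!val_eqE /= !inordK // !ltn_eqF.
have := card_perms_into A t_uniq; rewrite card_ord => <-; congr (_ * _)%N.
rewrite -sum1dep_card [RHS]big_mkcond /=; apply: eq_bigr => s _.
by rewrite /small_triple !nth_permuted_list // !inE andbT; case: (_ && _).
Qed.

Lemma sum_BF_small_triples n (x : 'I_n -> R) : sizes_in_quarter_half x ->
  (4 * \sum_(s : 'S_n) BF (permuted_list x s)
    + \sum_(s : 'S_n) small_triples (permuted_list x s) <= n`! * (2 * n + 3))%N.
Proof.
move=> x_range; rewrite big_distrr -big_split /= -card_Sn -sum_nat_const.
apply: leq_sum => s _; have := BF_small_triples (L := permuted_list x s).
rewrite size_map size_enum_ord; apply; apply/allP => _ /mapP[i _ ->].
by have [? ?] := x_range (s i); apply/andP.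
Qed.

End RandomOrder.

Section OptBounds.
Variable R : realType.

Lemma card_lt_of_sum_le (I : finType) (P : pred I) (F : I -> R) (e : R) :
  (forall i, P i -> e < F i) -> \sum_(i | P i) F i <= 1 ->
  #|[set i | P i]|%:R * e < 1.
Proof.
move=> e_lt sum_le; have [i0 Pi0|P0] := pickP P; last first.
  by rewrite (eq_card0 (A := [set i | P i])) ?mul0r // => i; rewrite inE P0.
apply: lt_le_trans sum_le; rewrite -sum1dep_card natr_sum mulr_suml.
apply: ltr_sum => [|i /e_lt]; last by rewrite mul1r.
by apply/hasP; exists i0; rewrite ?mem_index_enum.
Qed.

Lemma packable_quarter_half n (x : 'I_n -> R) m :
  sizes_in_quarter_half x -> packable x m ->
  (n <= 3 * m)%N /\ (#|[set i | (1/3 < x i)%R]| <= 2 * m)%N.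
Proof.
move=> x_range [f bins].
have bin_card j : (#|[set i | f i == j]| <= 3)%N.
  rewrite -ltnS -(ltr_nat R).
  suff : #|[set i | f i == j]|%:R * (1/4) < 1 :> R by lra.
  by apply: card_lt_of_sum_le (bins j) => i _; case: (x_range i).
have bin_large j : (#|[set i | (f i == j) && (1/3 < x i)%R]| <= 2)%N.
  rewrite -ltnS -(ltr_nat R).
  suff : #|[set i | (f i == j) && (1/3 < x i)]|%:R * (1/3) < 1 :> R by lra.
  apply: (card_lt_of_sum_le (F := x)) (le_trans _ (bins j)) => [i /andP[]//|].
  rewrite big_mkcondr /=; apply: ler_sum => i _.
  by case: ifP => // _; have [+ _] := x_range i; lra.
split.
  rewrite -[n in (n <= _)%N]card_ord -sum1_card (partition_big f predT) //=.
  apply: (@leq_trans (\sum_(j < m) 3)); last by rewrite sum_nat_const card_ord mulnC.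
  by apply: leq_sum => j _; rewrite sum1dep_card.
rewrite -sum1dep_card (partition_big f predT) //=.
apply: (@leq_trans (\sum_(j < m) 2)); last by rewrite sum_nat_const card_ord mulnC.
apply: leq_sum => j _; rewrite sum1dep_card.
rewrite (eq_card (B := [set i | (f i == j) && (1/3 < x i)%R])) //.
by move=> i; rewrite !inE andbC.
Qed.

End OptBounds.

Section Arith.
Variable R : realType.

Lemma falling3_bounds (y : R) : 2 <= y ->
  (y - 2) ^+ 3 <= y * (y - 1) * (y - 2) <= y ^+ 3.
Proof.
move=> y_ge; have y2 : 0 <= y - 2 by lra.
rewrite !exprS expr0 !mulr1; apply/andP; split.
- have : (y - 2) * (y - 2) <= y * (y - 1) by nra.
  nra.
- have : y * (y - 1) <= y * y by nra.
  nra.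
Qed.

Lemma small_triples_excess (M N a b mu : R) : 1000 <= M -> 0 <= mu <= 1/81 ->
  N <= 3 * M -> N - 2 * M <= a -> a <= N -> N - 2 <= 3 * b ->
  (6 - 2 * mu) * M < 2 * N + 3 ->
  (2 * N + 3 - (6 - 2 * mu) * M) * (N * (N - 1) * (N - 2))
    <= b * (a * (a - 1) * (a - 2)).
Proof.
move=> M_ge /andP[mu_ge mu_le] N_le a_ge a_le b_ge excess.
(* N is within 3/2 + M/81 of 3M, so a - 2 and b are both about M: the right side
   is about 0.93 M^4 while the left side is at most (3 + 2M/81) 27 M^3. *)
have N_gt : (3 - 1/81) * M - 3/2 < N by nra.
have a2_ge : 49/50 * M <= a - 2 by lra.
have b_ge' : 149/150 * M <= b by lra.
have /andP[N3_ge N3_le] := @falling3_bounds N ltac:(lra).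
have /andP[a3_ge _] := @falling3_bounds a ltac:(lra).
have N3_ge0 : 0 <= N * (N - 1) * (N - 2).
  by apply: le_trans N3_ge; apply: exprn_ge0; lra.
have N_cube : N ^+ 3 <= (3 * M) ^+ 3 by apply: lerXn2r; rewrite ?nnegrE; lra.
have a_cube : (49/50 * M) ^+ 3 <= (a - 2) ^+ 3.
  by apply: lerXn2r; rewrite ?nnegrE; lra.
apply: (le_trans (y := (3 + 2 * M / 81) * (3 * M) ^+ 3)).
  apply: ler_pM; [lra | done | nra | exact: le_trans N3_le N_cube].
apply: (le_trans (y := 149/150 * M * (49/50 * M) ^+ 3)); last first.
  apply: ler_pM; [lra | apply: exprn_ge0; lra | lra |].
  exact: le_trans a_cube a3_ge.
rewrite !exprMn; have M3_gt : 0 < M ^+ 3 by apply: exprn_gt0; lra.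
nra.
Qed.

End Arith.

Lemma limn_esup_le_eventually (R : realType) (u : (\bar R)^nat) (l : \bar R) N :
  (forall m, (N <= m)%N -> (u m <= l)%E) -> (limn_esup u <= l)%E.
Proof.
move=> u_le; apply: le_trans (ereal_inf_lbound _) _.
  by exists [set k | (N <= k)%N]%classic => //; exists N.
by apply: ge_ereal_sup => _ [m /= N_m <-]; exact: u_le.
Qed.

Section ExpectedBF.
Variable R : realType.

Lemma natr_ffact3 k : ((k ^_ 3)%:R : R) = k%:R * (k%:R - 1) * (k%:R - 2).
Proof.
case: k => [|[|[|k]]]; last first.
  rewrite !ffactnS ffactn0 muln1 /= !natrM -[k.+3]addn3 -[k.+2]addn2 -[k.+1]addn1.
  by rewrite !natrD; ring.
all: by rewrite /= ?(mulr0, mul0r, subrr).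
Qed.

Lemma expected_BF_arith (M N a b EB EK mu : R) : 1000 <= M -> 0 <= mu <= 1/81 ->
  N <= 3 * M -> N - 2 * M <= a -> a <= N -> N - 2 <= 3 * b -> 0 <= EK ->
  4 * EB + EK <= 2 * N + 3 ->
  EK * (N * (N - 1) * (N - 2)) = b * (a * (a - 1) * (a - 2)) ->
  EB <= (3/2 - mu/2) * M.
Proof.
move=> M_ge mu_range N_le a_ge a_le b_ge EK_ge sum_le EK_eq.
have [excess|] := ltP ((6 - 2 * mu) * M) (2 * N + 3); last by lra.
have N_gt : 2 < N by case/andP: mu_range => *; nra.
have N3_gt : 0 < N * (N - 1) * (N - 2) by rewrite !mulr_gt0 //; lra.
have := small_triples_excess M_ge mu_range N_le a_ge a_le b_ge excess.
rewrite -EK_eq ler_pM2r //; lra.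
Qed.

Lemma expected_BF_le n (x : 'I_n -> R) m mu :
  sizes_in_quarter_half x -> packable x m -> 0 <= mu <= 1/81 -> (1000 <= m)%N ->
  expected_BF x <= (3/2 - mu/2) * m%:R.
Proof.
move=> x_range x_pack mu_range m_ge.
set A := [set i | small_item (x i)].
pose SK : R := \sum_(s : 'S_n) (small_triples (permuted_list x s))%:R.
have [n_le large_le] := packable_quarter_half x_range x_pack.
have n_le_A : (n <= 2 * m + #|A|)%N.
  have : #|[set i | (1/3 < x i)%R]| = #|~: A|.
    by apply: eq_card => i; rewrite !inE /small_item ltNge.
  by have := cardsC A; rewrite card_ord; lia.
have n_le_div : (n <= 3 * (n %/ 3) + 2)%N.
  by have := divn_eq n 3; have := ltn_pmod n (isT : 0 < 3)%N; lia.
have A_le : (#|A| <= n)%N by rewrite -[n in (_ <= n)%N]card_ord max_card.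
have F_gt : 0 < n`!%:R :> R by rewrite ltr0n fact_gt0.
apply: (@expected_BF_arith m%:R n%:R #|A|%:R (n %/ 3)%:R _ (SK / n`!%:R)) => //.
- by rewrite (ler_nat R 1000).
- by rewrite -natrM ler_nat.
- by move: n_le_A; rewrite -(ler_nat R) natrD natrM; lra.
- by rewrite ler_nat.
- by move: n_le_div; rewrite -(ler_nat R) natrD natrM; lra.
- by rewrite divr_ge0 ?sumr_ge0.
- rewrite /expected_BF mulrA -mulrDl ler_pdivrMr // /SK.
  move: (sum_BF_small_triples x_range).
  by rewrite -(ler_nat R) natrD natrM natrM natrD natrM !natr_sum; nra.
rewrite -!natr_ffact3 mulrAC /SK -natr_sum -[in LHS]natrM sum_small_triples.
rewrite natrM natrM.
by rewrite mulrCA mulrAC mulfV ?mul1r // gt_eqF.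
Qed.

End ExpectedBF.

Theorem theorem1p4 (R : realType) (mu : R) :
  0 < mu < 1 -> 81 * mu = (1 - mu) ^+ 3 ->
  (limn_esup (@bf_ratio_sup R) <= (3 / 2 - mu / 2)%:E)%E.
Proof.
move=> /andP[mu_gt mu_lt] mu_root.
have mu_le : mu <= 1/81.
  suff : (1 - mu) ^+ 3 <= 1 by lra.
  by apply: exprn_ile1; lra.
apply: (limn_esup_le_eventually (N := 1000)) => m m_ge.
apply: ge_ereal_sup => _ [n [x [x_range [x_pack _] ->]]].
rewrite lee_fin ler_pdivrMr ?ltr0n; last by apply: leq_trans m_ge.
by apply: expected_BF_le x_range x_pack _ m_ge; lra.
Qed.
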